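(* Let $k\ge1$, $n=2^k-1$, and let $\mathbf{G}\in\mathbb{F}_2^{k\times n}$ be a generator matrix of the $[2^k-1,k,2^{k-1}]_2$ binary simplex code (its columns are all nonzero vectors of $\mathbb{F}_2^k$). Consider the storage system with files $f_1,\dots,f_k$ in which each file's recovery sets are all its recovery sets of size $1$ or $2$ and all servers have service rate $1$. Let $G$ be the graph representation of the code. Then $m(G)=\lambda^\star(\mathbf{G})=v(G)=2^{k-1}$.
   Context: Let $\mathbf{g}_1,\dots,\mathbf{g}_n$ be the columns of $\mathbf{G}$ and $\mathbf{e}_i$ the $i$-th unit vector. The recovery sets of size at most 2 for file $f_i$ are the sets $\{r\}$ with $\mathbf{g}_r=\mathbf{e}_i$ and $\{a,b\}$, $a\ne b$, with $\mathbf{g}_a+\mathbf{g}_b=\mathbf{e}_i$; list them as $R_{i,1},\dots,R_{i,t_i}$. The service rate region $\mathcal{S}(\mathbf{G})$ is the set of $\boldsymbol{\lambda}\in\mathbb{R}^k$ for which there exist real $\lambda_{i,j}\ge0$ with $\sum_j\lambda_{i,j}=\lambda_i$ for all $i$ and $\sum_{i}\sum_{j:\,l\in R_{i,j}}\lambda_{i,j}\le1$ for every server $l\in[n]$; the service capacity is $\lambda^\star(\mathbf{G})=\max\{\sum_i\lambda_i:\boldsymbol{\lambda}\in\mathcal{S}(\mathbf{G})\}$. The graph representation $G$ has vertex set $[n]$ plus one new dummy vertex per size-1 recovery set, and one edge per recovery set: $\{a,b\}$ gives an edge $ab$, $\{r\}$ gives an edge between $r$ and its dummy vertex. $m(G)$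 is the matching number (maximum number of pairwise non-adjacent edges) and $v(G)$ the vertex cover number (minimum number of vertices meeting all edges). *)

From mathcomp Require Import all_boot all_order all_algebra.
From mathcomp Require Import reals.
Set Implicit Arguments. Unset Strict Implicit. Unset Printing Implicit Defensive.
Import Order.TTheory GRing.Theory Num.Theory.
Local Open Scope ring_scope.

Section Storage.
Variables (k n : nat) (G : 'M['F_2]_(k, n)).

Definition unitv (i : 'I_k) : 'cV['F_2]_k := delta_mx i 0.

Definition recsets (i : 'I_k) : {set {set 'I_n}} :=
  [set S : {set 'I_n} |
     [exists r : 'I_n, (S == [set r]) && (col r G == unitv i)]
  || [exists a : 'I_n, exists b : 'I_n,
        [&& a != b, S == [set a; b] & col a G + col b G == unitv i]]].

Definition in_service_region (R : realType) (lam : 'I_k -> R) : Prop :=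
  exists x : 'I_k -> {set 'I_n} -> R,
    [/\ (forall i S, S \in recsets i -> 0 <= x i S),
        (forall i, \sum_(S in recsets i) x i S = lam i) &
        (forall l : 'I_n, \sum_(i < k) \sum_(S in recsets i | l \in S) x i S <= 1)].

Definition is_service_capacity (R : realType) (c : R) : Prop :=
  (exists lam : 'I_k -> R, in_service_region lam /\ \sum_(i < k) lam i = c) /\
  (forall lam : 'I_k -> R, in_service_region lam -> \sum_(i < k) lam i <= c).

(* Edges are indexed by recovery sets (i, S);
   vertices are the servers (inl) plus dummy vertices (inr (i,S)), one for
   each size-1 recovery set (i,S) (other inr vertices are isolated and
   irrelevant). *)
Definition edgeT := ('I_k * {set 'I_n})%type.
Definition vertT := ('I_n + edgeT)%type.

Definition is_edge (e : edgeT) : bool := e.2 \in recsets e.1.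

Definition ends (e : edgeT) : {set vertT} :=
  if #|e.2| == 1%N then inr e |: (@inl _ edgeT @: e.2) else @inl _ edgeT @: e.2.

Definition is_matching (M : {set edgeT}) : bool :=
  [forall e in M, is_edge e] &&
  [forall e in M, forall f in M, (e != f) ==> [disjoint ends e & ends f]].

Definition is_vertex_cover (C : {set vertT}) : bool :=
  [forall e, is_edge e ==> ~~ [disjoint ends e & C]].

Definition matching_number : nat :=
  \max_(M : {set edgeT} | is_matching M) #|M|.

Definition vertex_cover_number : nat :=
  \big[minn/#|{: vertT}|]_(C : {set vertT} | is_vertex_cover C) #|C|.

End Storage.

Definition is_simplex_generator (k : nat) (G : 'M['F_2]_(k, 2 ^ k - 1)) : Prop :=
  [/\ injective (fun j => col j G),
      (forall j, col j G != 0) &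
      (forall v : 'cV['F_2]_k, v != 0 -> exists j, col j G = v)].

From mathcomp Require Import all_boot all_order all_algebra.
From mathcomp Require Import reals.
Import Order.TTheory GRing.Theory Num.Theory.
Local Open Scope ring_scope.
Set Implicit Arguments. Unset Strict Implicit. Unset Printing Implicit Defensive.

(* Weak duality sandwiches the three quantities: a matching of the graph
   representation is a feasible service allocation of the same total rate,
   while a set of servers meeting every recovery set bounds both the size of
   any matching and the total service rate.  For the simplex code the servers
   storing odd-weight columns meet every recovery set, because e_i = g_a + g_b
   has odd weight; and pairing each odd-weight column v with v + e_1 (with v
   alone when v = e_1) is a matching of the same size 2^(k-1) for file f_1. *)

Lemma card_le_disjoint_meets (I U : finType) (E : {set I}) (h : I -> {set U})
    (C : {set U}) :
  {in E &, forall e f, e != f -> [disjoint h e & h f]} ->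
  {in E, forall e, ~~ [disjoint h e & C]} -> (#|E| <= #|C|)%N.
Proof.
move=> disjE meetC.
pose p e := [pick x in h e :&: C].
have pE e : e \in E -> exists2 x, p e = Some x & x \in h e :&: C.
  move=> eE; rewrite /p; case: pickP => [x xhC | none]; first by exists x.
  have := meetC e eE; rewrite -setI_eq0 => /set0Pn[x xhC].
  by have := none x; rewrite xhC.
have p_inj : {in E &, injective p}.
  move=> e f eE fE; have [x -> /setIP[xe _]] := pE e eE.
  have [y -> /setIP[yf _]] := pE f fE; case=> eq_xy; rewrite -{}eq_xy in yf.
  apply/eqP/contraT => /(disjE e f eE fE)/disjointFr/(_ xe).
  by rewrite yf.
rewrite -(card_in_imset p_inj) -(card_imset C (@Some_inj _)).
apply/subset_leq_card/subsetP => _ /imsetP[e eE ->].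
by have [x -> /setIP[_ xC]] := pE e eE; apply: imset_f.
Qed.

Lemma bigmin_leq (I : finType) (P : pred I) (F : I -> nat) x0 i :
  P i -> (\big[minn/x0]_(j | P j) F j <= F i)%N.
Proof.
move=> Pi; have : i \in index_enum I by rewrite mem_index_enum.
elim: (index_enum I) => [//|j r IHr]; rewrite inE big_cons => /predU1P[<-|/IHr].
  by rewrite Pi geq_minl.
by case: (P j) => // le_i; rewrite geq_min le_i orbT.
Qed.

Section GraphDuality.
Variables (k n : nat) (G : 'M['F_2]_(k, n)).

Definition server_cover (C : {set 'I_n}) : Prop :=
  forall i S, S \in recsets G i -> ~~ [disjoint S & C].

Lemma mem_inl_imset (A : {set 'I_n}) (v : vertT k n) :
  (v \in inl @: A) = if v is inl l then l \in A else false.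
Proof.
case: v => [l|e]; first by apply: mem_imset => x y [].
by apply/imsetP => -[].
Qed.

Lemma inl_ends (e : edgeT k n) l : (inl l \in ends e) = (l \in e.2).
Proof. by rewrite /ends; case: ifP; rewrite ?inE mem_inl_imset. Qed.

Lemma disjoint_ends (e f : edgeT k n) :
  e != f -> [disjoint e.2 & f.2] -> [disjoint ends e & ends f].
Proof.
move=> neq_ef disj_ef; apply/pred0P => -[l | d] /=.
  rewrite !inl_ends; apply/negP => /andP[le lf].
  by rewrite (disjointFr disj_ef le) in lf.
rewrite /ends; do 2 case: ifP => _; rewrite ?inE ?mem_inl_imset ?orbF ?andbF //.
by apply/negbTE; apply: contra neq_ef => /andP[/eqP[<-] /eqP[<-]].
Qed.

Lemma server_cover_vertex_cover C : server_cover C -> is_vertex_cover G (inl @: C).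
Proof.
move=> coverC; apply/forall_inP => e /coverC/pred0Pn[l /andP[le lC]] /=.
by apply/pred0Pn; exists (inl l); rewrite /= inl_ends mem_inl_imset; apply/andP.
Qed.

Lemma matching_le_cover M C :
  is_matching G M -> is_vertex_cover G C -> (#|M| <= #|C|)%N.
Proof.
case/andP=> /forall_inP edgeM /forall_inP disjM /forall_inP coverC.
apply: (card_le_disjoint_meets (h := @ends k n)) => [e f eM fM neq_ef|e eM].
  by have /forall_inP/(_ f fM)/implyP := disjM e eM; apply.
exact/coverC/edgeM.
Qed.

Lemma vertex_cover_number_le C :
  is_vertex_cover G C -> (vertex_cover_number G <= #|C|)%N.
Proof. exact: bigmin_leq. Qed.

Variable R : realType.

Lemma matching_service_point M : is_matching G M ->
  exists lam : 'I_k -> R, in_service_region G lam /\ \sum_(i < k) lam i = #|M|%:R.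
Proof.
case/andP=> /forall_inP edgeM /forall_inP disjM.
pose x (i : 'I_k) S : R := ((i, S) \in M)%:R.
have sum_M (P : pred (edgeT k n)) :
    \sum_(i < k) \sum_(S in recsets G i | P (i, S)) x i S
    = #|[set e in M | P e]|%:R.
  rewrite pair_big_dep -sumr_const big_mkcond [RHS]big_mkcond.
  apply: eq_bigr => e _.
  rewrite inE /x -surjective_pairing andbC.
  case eM: (e \in M); last by case: ifP.
  have edge_e : e.2 \in recsets G e.1 := edgeM e eM.
  by rewrite edge_e; case: (P e).
exists (fun i => \sum_(S in recsets G i) x i S); split; last first.
  transitivity (#|[set e in M | predT e]|%:R : R).
    by rewrite -sum_M; apply: eq_bigr => i _; apply: eq_bigl => S; rewrite andbT.
  by congr (_%:R); apply: eq_card => e; rewrite inE andbT.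
exists x; split=> // l.
rewrite (sum_M (fun e => l \in e.2)) lern1.
apply/card_le1_eqP => e f; rewrite !inE.
move=> /andP[eM le] /andP[fM lf]; apply/eqP/contraT => neq_fe.
have /forall_inP/(_ e eM)/implyP/(_ neq_fe) := disjM f fM.
by move/pred0P/(_ (inl l)); rewrite /= !inl_ends le lf.
Qed.

Lemma service_le_server_cover C (lam : 'I_k -> R) :
  server_cover C -> in_service_region G lam -> \sum_(i < k) lam i <= #|C|%:R.
Proof.
move=> coverC [x [x_ge0 sum_x load_x]].
have lam_le i : lam i <= \sum_(l in C) \sum_(S in recsets G i | l \in S) x i S.
  rewrite -sum_x.
  rewrite (le_trans (y := \sum_(S in recsets G i) \sum_(l in C | l \in S) x i S)) //.
    apply: ler_sum => S SR; have /pred0Pn[l /andP[lS lC]] := coverC i S SR.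
    rewrite (bigD1 l) /=; last by apply/andP.
    by rewrite lerDl sumr_ge0 // => l' _; apply: x_ge0.
  under eq_bigr do rewrite big_mkcondr.
  by rewrite exchange_big; apply: ler_sum => l _; rewrite big_mkcondr.
apply: (le_trans (ler_sum _ (fun i _ => lam_le i))).
by rewrite exchange_big /= -sumr_const; apply: ler_sum => l _; apply: load_x.
Qed.

Lemma matching_capacity_cover_eq M C :
  is_matching G M -> server_cover C -> #|M| = #|C| ->
  [/\ matching_number G = #|C|, is_service_capacity G (R:=R) #|C|%:R &
      vertex_cover_number G = #|C|].
Proof.
move=> matchM coverC cardM.
have inl_cover := server_cover_vertex_cover coverC.
have card_inlC : #|inl @: C : {set vertT k n}| = #|C|.
  by apply: card_imset => ? ? [].
split.
- apply/eqP; rewrite eqn_leq -{2}cardM (leq_bigmax_cond _ matchM) andbT.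
  by apply/bigmax_leqP => M' matchM'; rewrite -card_inlC matching_le_cover.
- split; last by move=> lam; apply: service_le_server_cover.
  by rewrite -cardM; apply: matching_service_point.
- apply/eqP; rewrite eqn_leq -{1}card_inlC vertex_cover_number_le //=.
  apply: (big_ind (fun m => #|C| <= m)%N) => [|a b le_a le_b|C' cover_C'].
  + by rewrite -card_inlC max_card.
  + by rewrite leq_min le_a le_b.
  + by rewrite -cardM matching_le_cover.
Qed.

End GraphDuality.

Lemma F2_neq1 (x : 'F_2) : (x != 1) = (x == 0).
Proof. by case: x => [[|[|]]]. Qed.

Lemma addvv_F2 k (v : 'cV['F_2]_k) : v + v = 0.
Proof.
by apply/matrixP => i j; rewrite !mxE (addrr_pchar2 (pchar_Fp (isT : prime 2))).
Qed.

Lemma addv_eq0_F2 k (u v : 'cV['F_2]_k) : (u + v == 0) = (u == v).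
Proof. by rewrite -(addvv_F2 v) (inj_eq (addIr v)). Qed.

Definition parity k (v : 'cV['F_2]_k) : 'F_2 := \sum_i v i 0.

Lemma parityD k (u v : 'cV['F_2]_k) : parity (u + v) = parity u + parity v.
Proof. by rewrite /parity -big_split; apply: eq_bigr => i _; rewrite mxE. Qed.

Lemma parity0 k : parity (0 : 'cV['F_2]_k) = 0.
Proof. by rewrite /parity big1 // => i _; rewrite mxE. Qed.

Lemma parity_unitv k (i : 'I_k) : parity (unitv i) = 1.
Proof.
rewrite /parity (bigD1 i) //= big1 => [|j /negbTE neq_ji]; rewrite mxE ?neq_ji //.
by rewrite !eqxx addr0.
Qed.

Lemma card_odd_vectors k : (0 < k)%N ->
  #|[set v : 'cV['F_2]_k | parity v == 1]| = (2 ^ (k - 1))%N.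
Proof.
case: k => // k _; set O := [set v | _].
pose e0 := unitv (ord0 : 'I_k.+1).
have flipO : [set v + e0 | v in O] = ~: O.
  apply/setP => v; rewrite !inE; apply/imsetP/idP => [[w] | odd_v].
    by rewrite inE => /eqP odd_w ->; rewrite parityD odd_w parity_unitv.
  exists (v + e0); last by rewrite -addrA addvv_F2 addr0.
  by rewrite inE parityD parity_unitv; move: odd_v; rewrite F2_neq1 => /eqP ->.
have := cardsC O; rewrite -flipO card_imset; last exact: addIr.
by rewrite card_mx card_Fp // muln1 addnn expnS subn1 mul2n => /double_inj.
Qed.

Section OddServers.
Variables (k n : nat) (G : 'M['F_2]_(k, n)).

Definition odd_servers : {set 'I_n} := [set j | parity (col j G) == 1].

Lemma odd_servers_cover : server_cover G odd_servers.
Proof.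
move=> i S; rewrite inE => /orP[/existsP[r /andP[/eqP-> /eqP col_r]] |
  /existsP[a /existsP[b /and3P[_ /eqP-> /eqP col_ab]]]].
  by apply/pred0Pn; exists r; rewrite /= !inE col_r parity_unitv !eqxx.
have := parity_unitv i; rewrite -col_ab parityD => odd_ab.
apply/pred0Pn; have [odd_a | even_a] := eqVneq (parity (col a G)) 1.
  by exists a; rewrite /= !inE eqxx odd_a.
exists b; rewrite /= !inE eqxx orbT -odd_ab.
by move: even_a; rewrite F2_neq1 => /eqP ->; rewrite add0r eqxx.
Qed.

End OddServers.

Section SimplexCode.
Variables (k n : nat) (G : 'M['F_2]_(k, n)).
Hypothesis col_inj : injective (fun j => col j G).
Hypothesis col_neq0 : forall j, col j G != 0.
Hypothesis col_surj : forall v : 'cV['F_2]_k, v != 0 -> exists j, col j G = v.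

Lemma card_odd_servers : (0 < k)%N -> #|odd_servers G| = (2 ^ (k - 1))%N.
Proof.
move=> k_gt0; rewrite -(card_odd_vectors k_gt0) -(card_imset _ col_inj).
apply: eq_card => v; rewrite inE; apply/imsetP/idP => [[j] | odd_v].
  by rewrite inE => odd_j ->.
have /col_surj[j col_j] : v != 0.
  by apply: contraTneq odd_v => ->; rewrite parity0.
by exists j; rewrite // inE col_j.
Qed.

Variable i : 'I_k.

Definition pair_recset (j : 'I_n) : {set 'I_n} :=
  [set l | (col l G == col j G) || (col l G == col j G + unitv i)].

Lemma pair_recset_self j : j \in pair_recset j.
Proof. by rewrite inE eqxx. Qed.

Lemma pair_recset_recsets j :
  j \in odd_servers G -> pair_recset j \in recsets G i.
Proof.
move=> odd_j; rewrite inE; have [col_j | col_jN] := eqVneq (col j G) (unitv i).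
  apply/orP; left; apply/existsP; exists j; rewrite col_j eqxx andbT.
  apply/eqP/setP => l; rewrite !inE col_j addvv_F2 (negbTE (col_neq0 l)) orbF.
  by rewrite -col_j (inj_eq col_inj).
have [b col_b] : exists b, col b G = col j G + unitv i.
  by apply: col_surj; rewrite addv_eq0_F2.
apply/orP; right; apply/existsP; exists j; apply/existsP; exists b.
rewrite col_b addrA addvv_F2 add0r eqxx andbT; apply/andP; split.
  apply/eqP => eq_jb; have := parity_unitv i; move: col_b.
  by rewrite -eq_jb -{1}[col j G]addr0 => /addrI <-; rewrite parity0.
apply/eqP/setP => l; rewrite !inE -col_b.
by rewrite -!(inj_eq col_inj).
Qed.

Lemma pair_recset_uniq j j' l : j \in odd_servers G -> j' \in odd_servers G ->
  l \in pair_recset j -> l \in pair_recset j' -> j = j'.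
Proof.
have parity_flip (a b : 'I_n) : parity (col a G) = 1 -> parity (col b G) = 1 ->
    col a G <> col b G + unitv i.
  move=> odd_a odd_b /(congr1 (@parity k)).
  by rewrite parityD odd_a odd_b parity_unitv.
rewrite !inE => /eqP odd_j /eqP odd_j' /orP[]/eqP col_l /orP[]/eqP col_l'.
- by apply: col_inj; rewrite /= -col_l -col_l'.
- by case: (parity_flip _ _ odd_j odd_j'); rewrite -col_l.
- by case: (parity_flip _ _ odd_j' odd_j); rewrite -col_l'.
- by apply: col_inj; apply: (addIr (unitv i)); rewrite /= -col_l -col_l'.
Qed.

Definition odd_pairs : {set edgeT k n} :=
  [set (i, pair_recset j) | j in odd_servers G].

Lemma card_odd_pairs : #|odd_pairs| = #|odd_servers G|.
Proof.
apply: card_in_imset => j j' odd_j odd_j' [eq_jj'].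
apply: (pair_recset_uniq odd_j odd_j' (pair_recset_self j)).
by rewrite -eq_jj' pair_recset_self.
Qed.

Lemma odd_pairs_matching : is_matching G odd_pairs.
Proof.
apply/andP; split.
  by apply/forall_inP => _ /imsetP[j odd_j ->]; apply: pair_recset_recsets.
apply/forall_inP => _ /imsetP[j odd_j ->]; apply/forall_inP => _ /imsetP[j' odd_j' ->].
apply/implyP => neq_jj'; apply: disjoint_ends => //=; apply/pred0P => l /=.
apply: contra_neqF neq_jj' => /andP[l_j l_j'].
by rewrite (pair_recset_uniq odd_j odd_j' l_j l_j').
Qed.

End SimplexCode.

Theorem corollary2 (R : realType) (k : nat) (G : 'M['F_2]_(k, 2 ^ k - 1)) :
  (1 <= k)%N -> is_simplex_generator G ->
  [/\ matching_number G = (2 ^ (k - 1))%N,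
      is_service_capacity G (R:=R) (2 ^ (k - 1))%:R &
      vertex_cover_number G = (2 ^ (k - 1))%N].
Proof.
move=> k_gt0 [col_inj col_neq0 col_surj].
rewrite -(card_odd_servers col_inj col_surj k_gt0).
apply: matching_capacity_cover_eq (odd_servers_cover (G := G)) _.
  exact: (odd_pairs_matching col_inj col_neq0 col_surj (Ordinal k_gt0)).
exact: card_odd_pairs.
Qed.
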